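(* Let $\alpha,\theta,\gamma>0$, let $C_{K,r}=\max\big(4L^2K/(\theta^2\alpha N),\tilde r_2^2(\gamma)\big)$, and assume there is $A>0$ such that every $f\in F$ with $\|f-f^*\|_{L_2}^2=C_{K,r}$ satisfies $\|f-f^*\|_{L_2}^2\le AP\mathcal L_f$, and that $\theta-A^{-1}<-\theta$. Grant (Lip-Conv) and (Conv). Then on the event $\Omega_K$, $$\sup_{f\in F:\|f-f^*\|_{L_2}>\sqrt{C_{K,r}}}\mathrm{MOM}_K(\ell_{f^*}-\ell_f)<-\theta C_{K,r}\quad\text{and}\quad\sup_{f\in F:\|f-f^*\|_{L_2}\le\sqrt{C_{K,r}}}\mathrm{MOM}_K(\ell_{f^*}-\ell_f)\le\theta C_{K,r}.$$
   Context: Setting: $\bar{\mathcal Y}\subset\mathbb R$ convex, $F\subset L_2(\mu)$ a class of measurable functions $\mathcal X\to\bar{\mathcal Y}$, $\ell_f(x,y)=\bar\ell(f(x),y)$, $(X,Y)\sim P$, $X\sim\mu$, $Pg=\mathbb Eg(X,Y)$; $f^*$ unique minimizer of $f\mapsto P\ell_f$ over $F$, $\mathcal L_f=\ell_f-\ell_{f^*}$, $\|g\|_{L_2}=(\mathbb Eg(X)^2)^{1/2}$. (Lip-Conv): there is $L>0$ with $u\mapsto\bar\ell(u,y)$ convex and $L$-Lipschitz for all $y$. (Conv): $F$ convex. Data $(X_i,Y_i)_{i=1}^N$; $K$ divides $N$; blocks $B_1,\dots,B_K$ of size $N/K$ partition $\{1,\dots,N\}$; $P_{B_k}g=\frac KN\sum_{i\in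 B_k}g(X_i,Y_i)$; $\mathrm{MOM}_K(g)$ = median of $(P_{B_k}g)_k$. $\tilde r_2(\gamma)$ is a given positive number (the Rademacher complexity fixed point). Event: $\Omega_K=\{\forall f\in F\text{ with }\|f-f^*\|_{L_2}\le\sqrt{C_{K,r}},\ \exists J\subset\{1,\dots,K\},|J|>K/2,\ \forall k\in J:|(P_{B_k}-P)\mathcal L_f|\le\theta C_{K,r}\}$. *)

From Stdlib Require Import Reals Lra List.
Open Scope R_scope.

(* Abstract expectation (integral w.r.t. a probability measure) on functions
   T -> R: a normalized, positive, linear functional on a vector space of
   integrable functions. *)
Record Expectation (T : Type) := {
  integrable : (T -> R) -> Prop;
  Ex : (T -> R) -> R;
  int_const : forall c, integrable (fun _ => c);
  int_add : forall g h, integrable g -> integrable h ->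
              integrable (fun t => g t + h t);
  int_scal : forall c g, integrable g -> integrable (fun t => c * g t);
  Ex_add : forall g h, integrable g -> integrable h ->
              Ex (fun t => g t + h t) = Ex g + Ex h;
  Ex_scal : forall c g, integrable g -> Ex (fun t => c * g t) = c * Ex g;
  Ex_mono : forall g h, integrable g -> integrable h ->
              (forall t, g t <= h t) -> Ex g <= Ex h;
  Ex_const : forall c, Ex (fun _ => c) = c
}.
Arguments integrable {T} _ _.
Arguments Ex {T} _ _.

Section D.
Context {Xt : Type}.

Definition lossf (lbar : R -> R -> R) (f : Xt -> R) : Xt * R -> R :=
  fun p => lbar (f (fst p)) (snd p).

Definition excess (lbar : R -> R -> R) (f fstar : Xt -> R) : Xt * R -> R :=
  fun p => lossf lbar f p - lossf lbar fstar p.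

Definition L2norm (P : Expectation (Xt * R)) (g : Xt -> R) : R :=
  sqrt (Ex P (fun p => (g (fst p)) ^ 2)).

Definition PB (N K : nat) (blk : nat -> nat) (Xs : nat -> Xt) (Ys : nat -> R)
  (k : nat) (g : Xt * R -> R) : R :=
  INR K / INR N *
  fold_right Rplus 0
    (map (fun i => g (Xs i, Ys i)) (filter (fun i => Nat.eqb (blk i) k) (seq 0 N))).
End D.

Definition cnt (K : nat) (b : nat -> bool) : nat := length (filter b (seq 0 K)).

Definition is_median (K : nat) (v : nat -> R) (m : R) : Prop :=
  (K <= 2 * cnt K (fun k => if Rle_dec (v k) m then true else false))%nat /\
  (K <= 2 * cnt K (fun k => if Rle_dec m (v k) then true else false))%nat.

Definition CKr (L : R) (K N : nat) (theta alpha r : R) : R :=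
  Rmax (4 * L ^ 2 * INR K / (theta ^ 2 * alpha * INR N)) (r ^ 2).

(* The event Omega_K (for the fixed realization of the data) *)
Definition OmegaK {Xt : Type} (P : Expectation (Xt * R)) (lbar : R -> R -> R)
  (F : (Xt -> R) -> Prop) (fstar : Xt -> R) (N K : nat) (blk : nat -> nat)
  (Xs : nat -> Xt) (Ys : nat -> R) (theta C : R) : Prop :=
  forall f, F f -> L2norm P (fun x => f x - fstar x) <= sqrt C ->
    exists J : list nat, NoDup J /\ (forall k, In k J -> (k < K)%nat) /\
      (K < 2 * length J)%nat /\
      forall k, In k J ->
        Rabs (PB N K blk Xs Ys k (excess lbar f fstar) - Ex P (excess lbar f fstar))
          <= theta * C.

(* Blocks whose empirical excess loss is within [theta C] of its mean form a
   majority, and a median of the blocks is dominated by some block of any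
   majority.  Inside the ball of radius [sqrt C] this gives the bound
   [theta C - P L_f <= theta C].  Outside it, convexity of [F] provides the
   point [f0 = fstar + t (f - fstar)] on the sphere, where the margin condition gives
   [P L_f0 >= C / A], and convexity of the loss gives [L_f0 <= t L_f]; since
   [C / A - theta C > 0] and [t <= 1], every good block has
   [P_B L_f >= C / A - theta C].  On the event, only convexity of the loss is
   needed; the Lipschitz and block-size assumptions matter only for the
   probability of [Omega_K]. *)
From Stdlib Require Import Reals Lra Lia List FunctionalExtensionality Classical.
Open Scope R_scope.

Definition majority (K : nat) (J : list nat) : Prop :=
  NoDup J /\ (forall k, In k J -> (k < K)%nat) /\ (K < 2 * length J)%nat.

Lemma majority_meets_half (K : nat) (b : nat -> bool) (J : list nat) :
  majority K J -> (K <= 2 * cnt K b)%nat -> exists k, In k J /\ b k = true.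
Proof.
  intros [HJnodup [HJK HKJ]] Hb.
  destruct (classic (exists k, In k J /\ b k = true)) as [Hex | Hnone]; [exact Hex |].
  exfalso.
  assert (HJsub : incl J (filter (fun k => negb (b k)) (seq 0 K))).
  { intros k Hk. apply filter_In. split.
    - apply in_seq. specialize (HJK k Hk). lia.
    - destruct (b k) eqn:Ebk; [| reflexivity].
      exfalso. apply Hnone. exists k. auto. }
  pose proof (NoDup_incl_length HJnodup HJsub) as HJlen.
  pose proof (filter_length b (seq 0 K)) as Hsplit.
  rewrite length_seq in Hsplit. unfold cnt in Hb. lia.
Qed.

Lemma median_le_of_majority_le (K : nat) (v : nat -> R) (J : list nat) (B m : R) :
  majority K J -> (forall k, In k J -> v k <= B) -> is_median K v m -> m <= B.
Proof.
  intros HJ HvB [_ Hge].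
  destruct (majority_meets_half K _ J HJ Hge) as [k [Hk Hmk]].
  destruct (Rle_dec m (v k)) as [Hle |]; [| discriminate].
  specialize (HvB k Hk). lra.
Qed.

Lemma sum_map_opp {T : Type} (g h : T -> R) (l : list T) :
  (forall p, g p = - h p) ->
  fold_right Rplus 0 (map g l) = - fold_right Rplus 0 (map h l).
Proof.
  intros Hgh. induction l as [| a l IH]; simpl; [lra |].
  rewrite Hgh, IH. lra.
Qed.

Lemma sum_map_le_scale {T : Type} (g h : T -> R) (t : R) (l : list T) :
  (forall p, g p <= t * h p) ->
  fold_right Rplus 0 (map g l) <= t * fold_right Rplus 0 (map h l).
Proof.
  intros Hgh. induction l as [| a l IH]; simpl; [lra |].
  specialize (Hgh a). lra.
Qed.

Section BlockMeans.
Context {Xt : Type} (N K : nat) (blk : nat -> nat) (Xs : nat -> Xt) (Ys : nat -> R).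

Lemma PB_opp (k : nat) (g h : Xt * R -> R) :
  (forall p, g p = - h p) -> PB N K blk Xs Ys k g = - PB N K blk Xs Ys k h.
Proof.
  intros Hgh. unfold PB.
  rewrite (sum_map_opp (fun i => g (Xs i, Ys i)) (fun i => h (Xs i, Ys i)));
    [lra | intros; apply Hgh].
Qed.

Lemma PB_le_scale (k : nat) (g h : Xt * R -> R) (t : R) :
  (forall p, g p <= t * h p) -> PB N K blk Xs Ys k g <= t * PB N K blk Xs Ys k h.
Proof.
  intros Hgh. unfold PB.
  (* for [N = 0] the weight is [K / 0 = 0] *)
  assert (Hw : 0 <= INR K / INR N).
  { unfold Rdiv. apply Rmult_le_pos; [apply pos_INR |].
    destruct N as [| n]; [change (INR 0) with 0; rewrite Rinv_0; lra |].
    left. apply Rinv_0_lt_compat, lt_0_INR. lia. }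
  pose proof (sum_map_le_scale (fun i => g (Xs i, Ys i)) (fun i => h (Xs i, Ys i)) t
                (filter (fun i => Nat.eqb (blk i) k) (seq 0 N)) (fun i => Hgh _)).
  nra.
Qed.

End BlockMeans.

Lemma L2norm_scale {Xt : Type} (P : Expectation (Xt * R)) (g : Xt -> R) (t : R) :
  integrable P (fun p => (g (fst p)) ^ 2) -> 0 <= t ->
  L2norm P (fun x => t * g x) = t * L2norm P g.
Proof.
  intros Hg Ht. unfold L2norm.
  replace (fun p : Xt * R => (t * g (fst p)) ^ 2)
    with (fun p : Xt * R => t ^ 2 * (g (fst p)) ^ 2)
    by (apply functional_extensionality; intros; ring).
  rewrite Ex_scal, sqrt_mult_alt, sqrt_pow2; auto using pow2_ge_0.
Qed.

Lemma L2norm_convex_comb_sub {Xt : Type} (P : Expectation (Xt * R)) (f g : Xt -> R) (t : R) :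
  integrable P (fun p => (f (fst p) - g (fst p)) ^ 2) -> 0 <= t ->
  L2norm P (fun x => (t * f x + (1 - t) * g x) - g x) = t * L2norm P (fun x => f x - g x).
Proof.
  intros Hfg Ht.
  replace (fun x => (t * f x + (1 - t) * g x) - g x) with (fun x => t * (f x - g x))
    by (apply functional_extensionality; intros; ring).
  exact (L2norm_scale P (fun x => f x - g x) t Hfg Ht).
Qed.

Lemma Ex_excess {Xt : Type} (P : Expectation (Xt * R)) lbar f g :
  integrable P (lossf lbar f) -> integrable P (lossf lbar g) ->
  Ex P (excess lbar f g) = Ex P (lossf lbar f) - Ex P (lossf lbar g).
Proof.
  intros Hf Hg.
  replace (excess lbar f g) with (fun p => lossf lbar f p + (-1) * lossf lbar g p)
    by (apply functional_extensionality; intros; unfold excess; ring).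
  rewrite Ex_add, Ex_scal; auto using int_scal. ring.
Qed.

Lemma excess_convex_comb_le {Xt : Type} (Ybar : R -> Prop) (lbar : R -> R -> R)
  (f g : Xt -> R) (t : R) :
  (forall y u v s, Ybar u -> Ybar v -> 0 <= s <= 1 ->
     lbar (s * u + (1 - s) * v) y <= s * lbar u y + (1 - s) * lbar v y) ->
  (forall x, Ybar (f x)) -> (forall x, Ybar (g x)) -> 0 <= t <= 1 ->
  forall p, excess lbar (fun x => t * f x + (1 - t) * g x) g p <= t * excess lbar f g p.
Proof.
  intros Hconv Hf Hg Ht [x y]. unfold excess, lossf; simpl.
  pose proof (Hconv y (f x) (g x) t (Hf x) (Hg x) Ht). lra.
Qed.

Lemma CKr_pos (L : R) (K N : nat) (theta alpha r : R) :
  0 < r -> 0 < CKr L K N theta alpha r.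
Proof.
  intros Hr. unfold CKr. eapply Rlt_le_trans; [| apply Rmax_r]. apply pow_lt, Hr.
Qed.

Section OnOmegaK.
Context {Xt : Type} (P : Expectation (Xt * R)) (lbar : R -> R -> R)
  (F : (Xt -> R) -> Prop) (fstar : Xt -> R)
  (N K : nat) (blk : nat -> nat) (Xs : nat -> Xt) (Ys : nat -> R) (theta C : R).
Hypothesis hOmega : OmegaK P lbar F fstar N K blk Xs Ys theta C.

Lemma OmegaK_good_blocks (f : Xt -> R) :
  F f -> L2norm P (fun x => f x - fstar x) <= sqrt C -> exists J, majority K J /\
    forall k, In k J -> Ex P (excess lbar f fstar) - theta * C
                         <= PB N K blk Xs Ys k (excess lbar f fstar).
Proof.
  intros Hf Hd.
  destruct (hOmega f Hf Hd) as [J [HJnodup [HJK [HKJ HJ]]]].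
  exists J. split; [repeat split; assumption |].
  intros k Hk. specialize (HJ k Hk).
  pose proof (Rle_abs (Ex P (excess lbar f fstar) - PB N K blk Xs Ys k (excess lbar f fstar)))
    as Hdev.
  rewrite Rabs_minus_sym in Hdev. lra.
Qed.

Lemma median_le_of_good_blocks (f : Xt -> R) (B m : R) :
  (exists J, majority K J /\
     forall k, In k J -> B <= PB N K blk Xs Ys k (excess lbar f fstar)) ->
  is_median K (fun k => PB N K blk Xs Ys k (excess lbar fstar f)) m -> m <= - B.
Proof.
  intros [J [HJ HB]] Hm.
  refine (median_le_of_majority_le K _ J _ m HJ _ Hm). intros k Hk.
  rewrite (PB_opp N K blk Xs Ys k _ (excess lbar f fstar))
    by (intros; unfold excess; ring).
  specialize (HB k Hk). lra.
Qed.

Lemma median_le_in_ball (f : Xt -> R) (m : R) :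
  integrable P (lossf lbar f) -> integrable P (lossf lbar fstar) ->
  Ex P (lossf lbar fstar) <= Ex P (lossf lbar f) ->
  F f -> L2norm P (fun x => f x - fstar x) <= sqrt C ->
  is_median K (fun k => PB N K blk Xs Ys k (excess lbar fstar f)) m -> m <= theta * C.
Proof.
  intros Hf_int Hfstar_int Hmin Hf Hd Hm.
  pose proof (median_le_of_good_blocks f _ m (OmegaK_good_blocks f Hf Hd) Hm) as Hmed.
  rewrite Ex_excess in Hmed by assumption. lra.
Qed.

Section OutsideBall.
Context (Ybar : R -> Prop) (A : R).
Hypothesis hconv : forall y u v t, Ybar u -> Ybar v -> 0 <= t <= 1 ->
  lbar (t * u + (1 - t) * v) y <= t * lbar u y + (1 - t) * lbar v y.
Hypothesis hFval : forall f, F f -> forall x, Ybar (f x).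
Hypothesis hFconv : forall f g t, F f -> F g -> 0 <= t <= 1 ->
  F (fun x => t * f x + (1 - t) * g x).
Hypothesis hFL2d : forall f g, F f -> F g ->
  integrable P (fun p => (f (fst p) - g (fst p)) ^ 2).
Hypothesis hfstarF : F fstar.
Hypothesis hC : 0 < C.
Hypothesis hA : 0 < A.
Hypothesis hmargin : forall f, F f -> (L2norm P (fun x => f x - fstar x)) ^ 2 = C ->
  (L2norm P (fun x => f x - fstar x)) ^ 2 <= A * Ex P (excess lbar f fstar).
Hypothesis hthetaA : theta - / A < - theta.

Lemma median_le_outside_ball (f : Xt -> R) (m : R) :
  F f -> sqrt C < L2norm P (fun x => f x - fstar x) ->
  is_median K (fun k => PB N K blk Xs Ys k (excess lbar fstar f)) m ->
  m <= theta * C - C / A.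
Proof.
  intros Hf Hd Hm.
  set (n := L2norm P (fun x => f x - fstar x)) in Hd.
  assert (HsqrtC : 0 < sqrt C) by (apply sqrt_lt_R0, hC).
  set (t := sqrt C / n).
  assert (Ht : 0 < t <= 1).
  { assert (Hn : n * / n = 1) by (field; lra).
    assert (0 < / n) by (apply Rinv_0_lt_compat; lra).
    unfold t, Rdiv. split; nra. }
  set (f0 := fun x => t * f x + (1 - t) * fstar x).
  assert (Hf0 : F f0) by (apply hFconv; auto; lra).
  assert (Hd0 : L2norm P (fun x => f0 x - fstar x) = sqrt C).
  { unfold f0. rewrite L2norm_convex_comb_sub by (auto; lra).
    fold n. unfold t. field. lra. }
  assert (Hmargin0 : C <= A * Ex P (excess lbar f0 fstar)).
  { pose proof (hmargin f0 Hf0) as H0. rewrite Hd0, pow2_sqrt in H0 by lra. auto. }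
  assert (Hgap : 0 < C / A - theta * C).
  { assert (0 < / A) by (apply Rinv_0_lt_compat, hA).
    replace (C / A - theta * C) with (C * (/ A - theta)) by (unfold Rdiv; ring).
    apply Rmult_lt_0_compat; lra. }
  enough (m <= - (C / A - theta * C)) by lra.
  apply (median_le_of_good_blocks f _ m); [| exact Hm].
  destruct (OmegaK_good_blocks f0 Hf0 (Req_le _ _ Hd0)) as [J [HJ Hgood]].
  exists J. split; [exact HJ |]. intros k Hk.
  assert (Hscale : PB N K blk Xs Ys k (excess lbar f0 fstar)
                   <= t * PB N K blk Xs Ys k (excess lbar f fstar)).
  { apply PB_le_scale, (excess_convex_comb_le Ybar); auto; lra. }
  assert (HP0 : C / A <= Ex P (excess lbar f0 fstar)).
  { assert (HAinv : A * / A = 1) by (field; lra).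
    assert (0 < / A) by (apply Rinv_0_lt_compat, hA).
    unfold Rdiv. nra. }
  specialize (Hgood k Hk). nra.
Qed.

End OutsideBall.

End OnOmegaK.

Theorem lemma2
  (Xt : Type) (Ybar : R -> Prop) (lbar : R -> R -> R) (L : R)
  (P : Expectation (Xt * R)) (F : (Xt -> R) -> Prop) (fstar : Xt -> R)
  (N K : nat) (blk : nat -> nat) (Xs : nat -> Xt) (Ys : nat -> R)
  (alpha theta gamma : R) (rt2 : R -> R) (A : R)
  (hYbar : forall u v t, Ybar u -> Ybar v -> 0 <= t <= 1 -> Ybar (t * u + (1 - t) * v))
  (hFval : forall f, F f -> forall x, Ybar (f x))
  (hFL2 : forall f, F f -> integrable P (fun p => (f (fst p)) ^ 2))
  (hFL2d : forall f g, F f -> F g ->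
            integrable P (fun p => (f (fst p) - g (fst p)) ^ 2))
  (hFloss : forall f, F f -> integrable P (lossf lbar f))
  (hfstarF : F fstar)
  (hfstar_min : forall f, F f -> Ex P (lossf lbar fstar) <= Ex P (lossf lbar f))
  (hfstar_uniq : forall f, F f -> Ex P (lossf lbar f) <= Ex P (lossf lbar fstar) -> f = fstar)
  (* (Lip-Conv) *)
  (hL : 0 < L)
  (hconv : forall y u v t, Ybar u -> Ybar v -> 0 <= t <= 1 ->
            lbar (t * u + (1 - t) * v) y <= t * lbar u y + (1 - t) * lbar v y)
  (hlip : forall y u v, Ybar u -> Ybar v -> Rabs (lbar u y - lbar v y) <= L * Rabs (u - v))
  (* (Conv) *)
  (hFconv : forall f g t, F f -> F g -> 0 <= t <= 1 ->
            F (fun x => t * f x + (1 - t) * g x))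
  (hK : (0 < K)%nat) (hKN : Nat.divide K N)
  (hblk : forall i, (i < N)%nat -> (blk i < K)%nat)
  (hblksz : forall k, (k < K)%nat ->
            cnt N (fun i => Nat.eqb (blk i) k) = (N / K)%nat)
  (halpha : 0 < alpha) (htheta : 0 < theta) (hgamma : 0 < gamma)
  (hrt2 : 0 < rt2 gamma)
  (hA : 0 < A)
  (hAcond : forall f, F f ->
      (L2norm P (fun x => f x - fstar x)) ^ 2 = CKr L K N theta alpha (rt2 gamma) ->
      (L2norm P (fun x => f x - fstar x)) ^ 2
        <= A * Ex P (excess lbar f fstar))
  (hthetaA : theta - / A < - theta)
  (* on the event Omega_K *)
  (hOmega : OmegaK P lbar F fstar N K blk Xs Ys theta (CKr L K N theta alpha (rt2 gamma))) :
  let C := CKr L K N theta alpha (rt2 gamma) in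
  (exists M, M < - theta * C /\
     forall f, F f -> L2norm P (fun x => f x - fstar x) > sqrt C ->
       forall m, is_median K (fun k => PB N K blk Xs Ys k (excess lbar fstar f)) m ->
         m <= M)
  /\
  (forall f, F f -> L2norm P (fun x => f x - fstar x) <= sqrt C ->
     forall m, is_median K (fun k => PB N K blk Xs Ys k (excess lbar fstar f)) m ->
       m <= theta * C).
Proof.
  intros C.
  assert (hC : 0 < C) by apply CKr_pos, hrt2.
  split.
  - exists (theta * C - C / A). split.
    + assert (0 < C * (/ A - 2 * theta)) by (apply Rmult_lt_0_compat; lra).
      unfold Rdiv. lra.
    + intros f Hf Hd m Hm.
      exact (median_le_outside_ball P lbar F fstar N K blk Xs Ys theta C hOmega Ybar A
               hconv hFval hFconv hFL2d hfstarF hC hA hAcond hthetaA f m Hf Hd Hm).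
  - intros f Hf Hd m Hm.
    exact (median_le_in_ball P lbar F fstar N K blk Xs Ys theta C hOmega f m
             (hFloss f Hf) (hFloss fstar hfstarF) (hfstar_min f Hf) Hf Hd Hm).
Qed.
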